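(* Let $p$ be an odd prime, $n\ge 1$, and let $f,g:\mathbb{F}_{p^n}\to\mathbb{F}_{p^n}$ both be planar Dembowski–Ostrom functions. Then $f$ and $g$ are EA-equivalent if and only if $f$ and $g$ are linear equivalent.
   Context: A function $f:\mathbb{F}_{p^n}\to\mathbb{F}_{p^n}$ is planar if for every $a\in\mathbb{F}_{p^n}^*$ the map $x\mapsto f(x+a)-f(x)$ is a bijection of $\mathbb{F}_{p^n}$. A Dembowski–Ostrom (DO) function is one given by a polynomial of the form $\sum_{i,j}a_{ij}x^{p^i+p^j}$ with $a_{ij}\in\mathbb{F}_{p^n}$. A function is affine if it is the sum of a constant and a linearized polynomial $\sum_i c_i x^{p^i}$ over $\mathbb{F}_{p^n}$. Two functions $f,g$ are EA-equivalent if $g=l_1\circ f\circ l_2+l_3$ with $l_1,l_2,l_3$ affine and $l_1,l_2$ permutations of $\mathbb{F}_{p^n}$; they are linear equivalent if $g=l_1\circ f\circ l_2$ with $l_1,l_2$ linearized permutation polynomials (i.e. $\mathbb{F}_p$-linear bijections). *)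

From HB Require Import structures.
From mathcomp Require Import all_boot all_order all_algebra all_field.
Set Implicit Arguments. Unset Strict Implicit. Unset Printing Implicit Defensive.
Import GRing.Theory.
Local Open Scope ring_scope.

Definition planar (F : finFieldType) (f : F -> F) : Prop :=
  forall a : F, a != 0 -> bijective (fun x => f (x + a) - f x).

Definition DO_fun (p : nat) (F : finFieldType) (f : F -> F) : Prop :=
  exists (N : nat) (a : 'I_N -> 'I_N -> F),
    forall x : F, f x = \sum_(i < N) \sum_(j < N) a i j * x ^+ (p ^ i + p ^ j)%N.

Definition linearized (p : nat) (F : finFieldType) (l : F -> F) : Prop :=
  exists (N : nat) (c : 'I_N -> F),
    forall x : F, l x = \sum_(i < N) c i * x ^+ (p ^ i)%N.

Definition affine (p : nat) (F : finFieldType) (l : F -> F) : Prop :=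
  exists (c0 : F) (N : nat) (c : 'I_N -> F),
    forall x : F, l x = c0 + \sum_(i < N) c i * x ^+ (p ^ i)%N.

Definition EA_equiv (p : nat) (F : finFieldType) (f g : F -> F) : Prop :=
  exists l1 l2 l3 : F -> F,
    affine p l1 /\ affine p l2 /\ affine p l3 /\ bijective l1 /\ bijective l2 /\
    (forall x, g x = l1 (f (l2 x)) + l3 x).

Definition lin_equiv (p : nat) (F : finFieldType) (f g : F -> F) : Prop :=
  exists l1 l2 : F -> F,
    [/\ linearized p l1, linearized p l2, bijective l1, bijective l2 &
        forall x, g x = l1 (f (l2 x))].

From mathcomp Require Import all_boot all_order all_algebra all_field.
From mathcomp Require Import ring.
Set Implicit Arguments. Unset Strict Implicit. Unset Printing Implicit Defensive.
Import GRing.Theory.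
Local Open Scope ring_scope.

(* A DO function is a quadratic form over F_p, so in odd characteristic it is
   even and satisfies the parallelogram law f(u+v) + f(u-v) = 2f(u) + 2f(v).
   If g = l1 o f o l2 + l3 with l_k = c_k + L_k, then adding g(x) and g(-x),
   the parallelogram law applied at u = c2, v = L2 x makes the odd part L3
   and all x-dependence through c2 collapse: 2 g(x) = 2 g(0) + 2 L1(f(L2 x)).
   Since g(0) = 0 and 2 is invertible, g = L1 o f o L2. *)

Section DembowskiOstrom.
Variables (p : nat) (F : finFieldType).
Hypothesis pcharFp : p \in [pchar F].

Let pnat_pchar_expn i : [pchar F].-nat (p ^ i)%N.
Proof.
rewrite (eq_pnat _ (pcharf_eq pcharFp)) pnatX pnat_id ?orTb //.
exact: pcharf_prime pcharFp.
Qed.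

Let frobeniusD i (x y : F) : (x + y) ^+ (p ^ i) = x ^+ (p ^ i) + y ^+ (p ^ i).
Proof. exact: exprDn_pchar. Qed.

Let frobeniusN i (x : F) : (- x) ^+ (p ^ i) = - x ^+ (p ^ i).
Proof. exact: exprNn_pchar. Qed.

Lemma linearizedD (L : F -> F) : linearized p L -> {morph L : x y / x + y}.
Proof.
case=> N [c defL] x y; rewrite !defL -big_split /=.
by apply: eq_bigr => i _; rewrite frobeniusD mulrDr.
Qed.

Lemma linearized0 (L : F -> F) : linearized p L -> L 0 = 0.
Proof. by move=> linL; apply: (addrI (L 0)); rewrite -linearizedD // !addr0. Qed.

Lemma linearizedN (L : F -> F) : linearized p L -> {morph L : x / - x}.
Proof.
move=> linL x; apply: (addrI (L x)).
by rewrite -linearizedD // !subrr linearized0.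
Qed.

Lemma DO_fun0 (f : F -> F) : DO_fun p f -> f 0 = 0.
Proof.
have p_gt0 : (0 < p)%N by rewrite prime_gt0 // (pcharf_prime pcharFp).
case=> N [a defF]; rewrite defF big1 // => i _; rewrite big1 // => j _.
by rewrite expr0n addn_eq0 !expn_eq0 eqn0Ngt p_gt0 mulr0.
Qed.

Lemma DO_fun_parallelogram (f : F -> F) : DO_fun p f ->
  forall u v, f (u + v) + f (u - v) = f u *+ 2 + f v *+ 2.
Proof.
case=> N [a defF] u v; rewrite !defF -!sumrMnl -!big_split /=.
apply: eq_bigr => i _; rewrite -!sumrMnl -!big_split /=.
apply: eq_bigr => j _; rewrite !exprD !frobeniusD !frobeniusN; ring.
Qed.

End DembowskiOstrom.

Lemma DO_funN (p : nat) (F : finFieldType) (f : F -> F) :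
  odd p -> DO_fun p f -> forall x, f (- x) = f x.
Proof.
move=> odd_p [N [a defF]] x; rewrite !defF.
apply: eq_bigr => i _; apply: eq_bigr => j _.
have even_e : odd (p ^ i + p ^ j)%N = false by rewrite oddD !oddX odd_p !orbT.
by rewrite exprNn -signr_odd even_e expr0 mul1r.
Qed.

Lemma pchar_odd_two_neq0 (p : nat) (R : nzRingType) :
  p \in [pchar R] -> odd p -> 2%:R != 0 :> R.
Proof.
move=> pcharRp odd_p; rewrite -(dvdn_pcharf pcharRp).
apply: contraL odd_p => /(dvdn_leq (isT : (0 < 2)%N)) p_le2.
suff -> : p = 2%N by [].
by apply/eqP; rewrite eqn_leq p_le2 prime_gt1 ?(pcharf_prime pcharRp).
Qed.

Lemma affine_linearized (p : nat) (F : finFieldType) (l : F -> F) :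
  affine p l -> exists c (L : F -> F), linearized p L /\ l =1 (fun x => c + L x).
Proof.
case=> c [N [k defl]]; exists c, (fun x => \sum_(i < N) k i * x ^+ (p ^ i)).
by split => //; exists N, k.
Qed.

Lemma linearized_affine (p : nat) (F : finFieldType) (L : F -> F) :
  linearized p L -> affine p L.
Proof. by case=> N [k defL]; exists 0, N, k => x; rewrite add0r. Qed.

Lemma bijective_addl (V : zmodType) (l L : V -> V) (c : V) :
  bijective l -> l =1 (fun x => c + L x) -> bijective L.
Proof.
move=> bij_l defl; apply: (@eq_bij _ _ ((fun y => - c + y) \o l)).
  by apply: bij_comp => //; exact: (Bijective (addNKr c) (addKr c)).
by move=> x /=; rewrite defl addKr.
Qed.

Lemma EA_equiv_DO_linear (p : nat) (F : finFieldType) (f g L1 L2 L3 : F -> F)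
    (c1 c2 c3 : F) :
  p \in [pchar F] -> odd p -> DO_fun p f -> DO_fun p g ->
  linearized p L1 -> linearized p L2 -> linearized p L3 ->
  (forall x, g x = c1 + L1 (f (c2 + L2 x)) + (c3 + L3 x)) ->
  forall x, g x = L1 (f (L2 x)).
Proof.
move=> pcharFp odd_p DOf DOg linL1 linL2 linL3 defg x.
have L1D := linearizedD pcharFp linL1.
have g0 : c1 + L1 (f c2) + c3 = 0.
  by rewrite -(DO_fun0 pcharFp DOg) defg (linearized0 pcharFp linL2)
    (linearized0 pcharFp linL3) !addr0.
have g_sum : g x + g (- x) = (c1 + L1 (f c2) + c3) *+ 2 + L1 (f (L2 x)) *+ 2.
  rewrite !defg (linearizedN pcharFp linL2) (linearizedN pcharFp linL3).
  have := congr1 L1 (DO_fun_parallelogram pcharFp DOf c2 (L2 x)).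
  rewrite !mulr2n !L1D => parallelogram.
  transitivity ((c1 + c3) + (c1 + c3) + (L1 (f (c2 + L2 x)) + L1 (f (c2 - L2 x)))).
    by ring.
  by rewrite parallelogram; ring.
apply: (mulfI (pchar_odd_two_neq0 pcharFp odd_p)).
by rewrite !mulr_natl mulr2n -{2}(DO_funN odd_p DOg x) g_sum g0 mul0rn add0r.
Qed.

Theorem lemma1 (p n : nat) (F : finFieldType) (f g : F -> F) :
  prime p -> odd p -> (0 < n)%N -> #|F| = (p ^ n)%N ->
  DO_fun p f -> planar f -> DO_fun p g -> planar g ->
  (EA_equiv p f g <-> lin_equiv p f g).
Proof.
move=> prime_p odd_p _ cardF DOf _ DOg _.
have pcharFp : p \in [pchar F] by exact: card_finPcharP cardF prime_p.
split.
- case=> l1 [l2 [l3 [aff1 [aff2 [aff3 [bij1 [bij2 defg]]]]]]].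
  have [c1 [L1 [linL1 defl1]]] := affine_linearized aff1.
  have [c2 [L2 [linL2 defl2]]] := affine_linearized aff2.
  have [c3 [L3 [linL3 defl3]]] := affine_linearized aff3.
  exists L1, L2; split => //; first exact: bijective_addl bij1 defl1.
    exact: bijective_addl bij2 defl2.
  apply: (EA_equiv_DO_linear pcharFp odd_p DOf DOg linL1 linL2 linL3) => x.
  by rewrite defg defl1 defl2 defl3.
- case=> l1 [l2 [linl1 linl2 bij1 bij2 defg]].
  exists l1, l2, (fun=> 0); do ![split] => //; try exact: linearized_affine.
    by exists 0, 0%N, (fun=> 0) => x; rewrite big_ord0 addr0.
  by move=> x; rewrite defg addr0.
Qed.
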